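(* Let $J_{mult}\subset dWHA$ be the subgroup spanned by all substitutions $\binom{\rho}{\sigma}$ such that some letter occurs at least twice in $\rho$ or at least twice in $\sigma$. Then $J_{mult}$ is a Hopf ideal of $(dWHA,m,\mu)$: $m(J_{mult}\otimes dWHA)+m(dWHA\otimes J_{mult})\subset J_{mult}$, $\mu(J_{mult})\subset J_{mult}\otimes dWHA+dWHA\otimes J_{mult}$, and $\varepsilon(J_{mult})=0$. Consequently the $\mathbf Z$-linear map $\psi:dWHA\to\varphi(MPR)$ that is the identity on substitutions with no repeated letter in either word and zero on substitutions in $J_{mult}$ is a Hopf algebra morphism and a Hopf algebra retraction of the inclusion $\varphi(MPR)\subset dWHA$.
   Context: Words are finite sequences of letters; $*$ denotes concatenation; the support $\mathrm{supp}(\alpha)$ of a word is the set of letters occurring in it. The shuffle product $\alpha\times_{sh}\beta$ of words $\alpha=[c_1,\dots,c_p]$, $\beta=[d_1,\dots,d_q]$ is the sum, with multiplicities, over all ways of choosing $p$ of the $p+q$ positions, of the word obtained by placing the $c$'s in their original order in the chosen positions and the $d$'s in their original order in the remaining ones. A subword of $[a_1,\dots,a_m]$ is a word $[a_{i_1},\dots,a_{i_r}]$ with $i_1<\dots<i_r$. Definition of $dWHA$: Let $\mathcal X$ be a countably infinite alphabet. A substitution is a pair $p=\binom{\rho}{\sigma}$ of words over $\mathcal X$ with $\mathrm{supp}(\rho)=\mathrm{supp}(\sigma)$, considered up to simultaneously renaming the letters of both words by a bijection of $\mathcal X$. $dWHA$ is the free abelian group with basis all substitutions (including the empty substitution $\binom{[\,]}{[\,]}$),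 graded by $\deg(p)=\#\mathrm{supp}(\rho)$. Multiplication: for substitutions $p=\binom{\rho}{\sigma}$, $p'=\binom{\rho'}{\sigma'}$ written with $\mathrm{supp}(\rho)\cap\mathrm{supp}(\rho')=\emptyset$, $m(p\otimes p')=\binom{\rho*\rho'}{\sigma\times_{sh}\sigma'}$, meaning the sum of $\binom{\rho*\rho'}{\gamma}$ over the terms $\gamma$ (with multiplicity) of $\sigma\times_{sh}\sigma'$. The unit is the empty substitution. A good cut of a word $\sigma$ is a factorization $\sigma=\sigma_1*\sigma_2$ with $\mathrm{supp}(\sigma_1)\cap\mathrm{supp}(\sigma_2)=\emptyset$ (the two trivial cuts included). Comultiplication: $\mu(p)=\sum \binom{p^{-1}(\sigma_1)}{\sigma_1}\otimes\binom{p^{-1}(\sigma_2)}{\sigma_2}$, summed over all good cuts $\sigma=\sigma_1*\sigma_2$, where $p^{-1}(\sigma_i)$ is the subword of $\rho$ consisting of all occurrences in $\rho$ of letters of $\mathrm{supp}(\sigma_i)$. Counit: $\varepsilon$ is $1$ on the empty substitution and $0$ on all other substitutions. This is a Hopf algebra. $\varphi(MPR)$ denotes the sub Hopf algebra of $dWHA$ spanned by the substitutions in which neither the top nor the bottom word has a repeated letter (it is the image of the Hopf algebra of permutations $MPR$ under $[t_1,\dots,t_n]\mapsto\binom{[x_1,\dots,x_n]}{[x_{t_1},\dots,x_{t_n}]}$). *)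

From HB Require Import structures.
From mathcomp Require Import all_boot all_order all_algebra.
From mathcomp Require Import finmap.
From mathcomp Require Import monalg.

Set Implicit Arguments.
Unset Strict Implicit.
Unset Printing Implicit Defensive.

Import GRing.Theory.
Local Open Scope ring_scope.

(* Letters: the countably infinite alphabet X is nat.  Words: seq nat. *)
(* A substitution (rho ; sigma) with supp rho = supp sigma, up to a     *)
(* simultaneous bijective renaming of letters, is represented by its    *)
(* unique canonical representative: letters renamed 0,1,2,... in the    *)
(* order of their first occurrence in rho.                              *)

Definition same_supp (r s : seq nat) : bool := all (mem r) s && all (mem s) r.

Definition canonical_pair (rs : seq nat * seq nat) : bool :=
  (undup rs.1 == iota 0 (size (undup rs.1))) && same_supp rs.1 rs.2.

Record subst := Subst { subst_val : seq nat * seq nat;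
                        subst_canon : canonical_pair subst_val }.

HB.instance Definition _ := [isSub for subst_val].
HB.instance Definition _ := [Equality of subst by <:].
HB.instance Definition _ := [Choice of subst by <:].
HB.instance Definition _ := [Countable of subst by <:].

Definition top (p : subst) : seq nat := (subst_val p).1.
Definition bot (p : subst) : seq nat := (subst_val p).2.

Definition empty_subst : subst := @Subst ([::], [::]) erefl.

Definition sdeg (p : subst) : nat := size (undup (top p)).

(* canonical renaming of a pair of words (by first occurrence in the
   top word); packed into a substitution.  Used only on pairs with equal
   supports, where it yields the class of (r ; s). *)
Definition normalize (r s : seq nat) : seq nat * seq nat :=
  let f x := index x (undup r) in (map f r, map f s).

Definition mkSubst (r s : seq nat) : subst :=
  insubd empty_subst (normalize r s).

(* dWHA = free abelian group on substitutions; dWHA (x) dWHA = free     *)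
(* abelian group on pairs of substitutions.                             *)
Definition dWHA := malg subst int.
Definition dWHA2 := malg (subst * subst)%type int.

(* shuffle product of words, with multiplicities: for each choice of the
   positions (a bit mask of length p+q with p ones) of the letters of a *)
Fixpoint bitseqs (n : nat) : seq bitseq :=
  if n is n'.+1 then map (cons true) (bitseqs n') ++ map (cons false) (bitseqs n')
  else [:: [::]].

Fixpoint interleave (m : bitseq) (a b : seq nat) : seq nat :=
  match m with
  | [::] => [::]
  | true :: m' => head 0%N a :: interleave m' (behead a) b
  | false :: m' => head 0%N b :: interleave m' a (behead b)
  end.

Definition shuffle (a b : seq nat) : seq (seq nat) :=
  [seq interleave m a b | m <- bitseqs (size a + size b)
                        & count id m == size a].

(* product of two basis elements: rename the letters of q disjointly
   (shift by deg p), then  (rho*rho' ; sigma x_sh sigma') *)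
Definition mul_basis (p q : subst) : dWHA :=
  let k := sdeg p in
  let r := top p ++ map (addn k) (top q) in
  \sum_(g <- shuffle (bot p) (map (addn k) (bot q))) << mkSubst r g >>.

Definition mT (t : dWHA2) : dWHA :=
  \sum_(pq <- msupp t) mul_basis pq.1 pq.2 *~ t@_pq.

Definition unitW : dWHA := << empty_subst >>.

Definition comul_basis (p : subst) : dWHA2 :=
  let r := top p in let s := bot p in
  \sum_(i < (size s).+1 | ~~ has (mem (take i s)) (drop i s))
     << (mkSubst [seq x <- r | x \in take i s] (take i s),
         mkSubst [seq x <- r | x \in drop i s] (drop i s)) >>.

Definition comul (f : dWHA) : dWHA2 :=
  \sum_(p <- msupp f) comul_basis p *~ f@_p.

Definition counit (f : dWHA) : int := f@_empty_subst.

Definition tens (f g : dWHA) : dWHA2 :=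
  \sum_(p <- msupp f) \sum_(q <- msupp g) << (f@_p * g@_q) *g (p, q) >>.

Definition map2 (F : dWHA -> dWHA) (t : dWHA2) : dWHA2 :=
  \sum_(pq <- msupp t) tens (F << pq.1 >>) (F << pq.2 >>) *~ t@_pq.

Definition noRep (p : subst) : bool := uniq (top p) && uniq (bot p).
Definition hasRep (p : subst) : bool := ~~ noRep p.

Definition Jmult (f : dWHA) : Prop := forall p, f@_p != 0 -> hasRep p.

Definition inMPR (f : dWHA) : Prop := forall p, f@_p != 0 -> noRep p.

Definition J_A (t : dWHA2) : Prop := forall pq, t@_pq != 0 -> hasRep pq.1.
Definition A_J (t : dWHA2) : Prop := forall pq, t@_pq != 0 -> hasRep pq.2.
Definition JA_plus_AJ (t : dWHA2) : Prop :=
  forall pq, t@_pq != 0 -> hasRep pq.1 || hasRep pq.2.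

Definition psi (f : dWHA) : dWHA :=
  \sum_(p <- msupp f) (if noRep p then << p >> else 0) *~ f@_p.

(* The multiplication and the comultiplication of dWHA respect the property
   "no letter is repeated".  A term of p q has top word rho * rho' (the
   letters of q renamed apart from those of p) and bottom word a shuffle of
   sigma and sigma', i.e. a permutation of sigma * sigma'; so it has no
   repetition iff neither p nor q has one.  A term of mu(p) comes from a good
   cut sigma = sigma1 * sigma2, whose supports are disjoint and partition the
   letters of rho; so both its factors are repetition-free iff p is. *)

From mathcomp Require Import all_boot all_order all_algebra.
From mathcomp Require Import finmap monalg.
From mathcomp Require Import zify.

Set Implicit Arguments.
Unset Strict Implicit.
Unset Printing Implicit Defensive.

Lemma undup_map_in (T U : eqType) (f : T -> U) (s : seq T) :
  {in s &, injective f} -> undup (map f s) = map f (undup s).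
Proof.
elim: s => //= x s IHs f_inj.
have f_inj' : {in s &, injective f}.
  by move=> a b ha hb; apply: f_inj; rewrite inE ?ha ?hb orbT.
have -> : (f x \in map f s) = (x \in s).
  apply/mapP/idP => [[y ys fxy]|xs]; last by exists x.
  by rewrite (f_inj x y) ?inE ?eqxx ?ys ?orbT.
by case: (x \in s); rewrite /= IHs.
Qed.

Lemma map_index_iota (T : eqType) (s : seq T) :
  uniq s -> map (index^~ s) s = iota 0 (size s).
Proof.
case: s => [//|x0 s'] us; apply: (@eq_from_nth _ 0%N).
  by rewrite size_map size_iota.
by move=> i; rewrite size_map => lti; rewrite (nth_map x0) // nth_iota // index_uniq.
Qed.

Lemma uniq_filterC (T : eqType) (P : pred T) (s : seq T) :
  uniq s = uniq [seq x <- s | P x] && uniq [seq x <- s | ~~ P x].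
Proof.
have /permPl filterC_perm := perm_filterC P s.
rewrite -(perm_uniq filterC_perm) cat_uniq; congr (_ && _).
suff -> : has (mem [seq x <- s | P x]) [seq x <- s | ~~ P x] = false by [].
by apply/hasP => -[x] /=; rewrite !mem_filter => /andP[/negPf-> _] /andP[].
Qed.

Lemma same_suppP r s : reflect (r =i s) (same_supp r s).
Proof.
apply: (iffP andP) => [[/allP sr /allP rs] x|rs].
  by apply/idP/idP => [/rs|/sr].
by split; apply/allP => x /=; rewrite rs.
Qed.

Lemma same_supp_filter_mem (r t : seq nat) :
  {subset t <= r} -> same_supp [seq x <- r | x \in t] t.
Proof.
move=> tr; apply/same_suppP => x; rewrite mem_filter.
by case xt: (x \in t); rewrite // tr.
Qed.

Section Normalize.

Variables r s : seq nat.
Hypothesis rs : same_supp r s.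

Let rank x := index x (undup r).

Let mem_rs : r =i s. Proof. exact/same_suppP. Qed.

Lemma rank_inj_top : {in r &, injective rank}.
Proof. by move=> x y xr yr /index_inj; apply; rewrite ?mem_undup. Qed.

Lemma rank_inj_bot : {in s &, injective rank}.
Proof. by move=> x y; rewrite -!mem_rs; apply: rank_inj_top. Qed.

Lemma normalize_canonical : canonical_pair (normalize r s).
Proof.
apply/andP; split=> /=.
  by rewrite (undup_map_in rank_inj_top) map_index_iota ?undup_uniq // size_iota.
apply/same_suppP => y; apply/mapP/mapP => -[x xin ->]; exists x => //.
  by rewrite -mem_rs.
by rewrite mem_rs.
Qed.

Lemma mkSubstK : subst_val (mkSubst r s) = normalize r s.
Proof. exact: (insubdK empty_subst normalize_canonical). Qed.

Lemma noRep_mkSubst : noRep (mkSubst r s) = uniq r && uniq s.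
Proof.
rewrite /noRep /top /bot mkSubstK /=.
by rewrite (map_inj_in_uniq rank_inj_top) (map_inj_in_uniq rank_inj_bot).
Qed.

End Normalize.

Lemma mem_top_bot p : top p =i bot p.
Proof. by case: p => -[r s] canon; apply/same_suppP; rewrite /top /bot /=; case/andP: canon. Qed.

Lemma top_lt_sdeg p x : x \in top p -> x < sdeg p.
Proof.
case: p => -[r s] canon; rewrite /sdeg /top /=; case/andP: canon => /eqP /= canon _.
by rewrite -mem_undup canon mem_iota size_iota.
Qed.

Lemma noRep_empty : noRep empty_subst.
Proof. by []. Qed.

Lemma size_bitseqs n m : m \in bitseqs n -> size m = n.
Proof.
elim: n m => [|n IHn] m /=; first by rewrite inE => /eqP ->.
by rewrite mem_cat => /orP[] /mapP[m' /IHn <- ->].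
Qed.

Lemma perm_interleave m a b :
  size m = size a + size b -> count id m = size a ->
  perm_eq (interleave m a b) (a ++ b).
Proof.
elim: m a b => [|[] m IHm] a b /=; first by case: a; case: b.
  case: a => [|x a] //= sz cnt.
  by rewrite perm_cons IHm //; lia.
have := count_size id m; case: b => [|y b] /= sz_m sz cnt; first by lia.
by rewrite perm_sym -[y :: b]cat1s perm_catCA /= perm_cons perm_sym IHm //; lia.
Qed.

Lemma perm_shuffle a b g : g \in shuffle a b -> perm_eq g (a ++ b).
Proof.
case/mapP => m; rewrite mem_filter => /andP[/eqP cnt /size_bitseqs sz] ->.
exact: perm_interleave.
Qed.

Lemma has_shifted_apart (a b : seq nat) k :
  {in a, forall x, x < k} -> ~~ has (mem a) (map (addn k) b).
Proof. by move=> lt_k; apply/hasPn => _ /mapP[x _ ->]; apply/negP => /lt_k; lia. Qed.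

Section ProductTerm.

Variables p q : subst.
Let k := sdeg p.
Variable g : seq nat.
Hypothesis g_shuffle : perm_eq g (bot p ++ map (addn k) (bot q)).

Lemma same_supp_product_term : same_supp (top p ++ map (addn k) (top q)) g.
Proof.
have [tp tq] := (mem_top_bot p, mem_top_bot q).
apply/same_suppP => x; rewrite (perm_mem g_shuffle) !mem_cat tp; congr orb.
by apply/mapP/mapP => -[y yin ->]; exists y; rewrite // ?tq // -tq.
Qed.

Lemma uniq_product_term :
  uniq (top p ++ map (addn k) (top q)) && uniq g = noRep p && noRep q.
Proof.
have lt_k : {in top p, forall x, x < k} by move=> x /top_lt_sdeg.
have lt_k' : {in bot p, forall x, x < k}.
  by move=> x; rewrite -(mem_top_bot p) => /lt_k.
rewrite (perm_uniq g_shuffle) !cat_uniq !has_shifted_apart //.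
rewrite !(map_inj_uniq (@addnI k)) /noRep.
by case: (uniq (top p)); case: (uniq (bot p)); rewrite //= andbC.
Qed.

End ProductTerm.

Section CutTerm.

Variables (p : subst) (i : nat).
Let r := top p.
Let s := bot p.
Hypothesis good_cut : ~~ has (mem (take i s)) (drop i s).

Lemma subset_take_top : {subset take i s <= r}.
Proof.
by move=> x xs; rewrite /r mem_top_bot -(cat_take_drop i (bot p)) mem_cat xs.
Qed.

Lemma subset_drop_top : {subset drop i s <= r}.
Proof.
by move=> x xs; rewrite /r mem_top_bot -(cat_take_drop i (bot p)) mem_cat xs orbT.
Qed.

Lemma mem_drop_top x : x \in r -> (x \in drop i s) = (x \notin take i s).
Proof.
rewrite (mem_top_bot p) -/s -{1}(cat_take_drop i s) mem_cat.
case: (boolP (x \in take i s)) => //= xt _.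
by apply: contraNF good_cut => xd; apply/hasP; exists x.
Qed.

Lemma uniq_cut_term :
  (uniq [seq x <- r | x \in take i s] && uniq (take i s)) &&
  (uniq [seq x <- r | x \in drop i s] && uniq (drop i s)) = noRep p.
Proof.
rewrite /noRep -/r -/s (uniq_filterC (mem (take i s)) r).
rewrite -[in uniq s](cat_take_drop i s) cat_uniq good_cut.
rewrite (eq_in_filter mem_drop_top).
by case: (uniq (take i s)); case: (uniq (drop i s)); rewrite /= ?andbF ?andbT.
Qed.

End CutTerm.

Import GRing.Theory.
Local Open Scope ring_scope.

Section Support.

Variable K : choiceType.

Definition supp_in (P : pred K) (f : {malg int[K]}) := forall k, f@_k != 0 -> P k.

Lemma supp_in_sub (P Q : pred K) f : subpred P Q -> supp_in P f -> supp_in Q f.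
Proof. by move=> PQ Pf k /Pf /PQ. Qed.

Lemma supp_inU (P : pred K) k : P k -> supp_in P << k >>.
Proof.
by move=> Pk k'; rewrite mcoeffU; case: (k =P k') => [<-|_]; rewrite ?mulr0n ?eqxx.
Qed.

Lemma supp_in_sum (P : pred K) (I : Type) (r : seq I) (Q : pred I) F :
  (forall i, Q i -> supp_in P (F i)) -> supp_in P (\sum_(i <- r | Q i) F i).
Proof.
move=> PF k; rewrite raddf_sum /=; apply: contraNT => nPk.
by apply/eqP/big1 => i /PF PFi; apply/eqP; apply: contraNT nPk => /PFi.
Qed.

Lemma supp_in_Mz (P : pred K) f n : supp_in P f -> supp_in P (f *~ n).
Proof.
by move=> Pf k; rewrite raddfMz /=; have [->|/Pf] := eqVneq f@_k 0; rewrite ?mul0rz ?eqxx.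
Qed.

End Support.

Section LinearExtension.

Variables K K' : choiceType.

Definition linext (g : K -> {malg int[K']}) (f : {malg int[K]}) : {malg int[K']} :=
  \sum_(p <- msupp f) g p *~ f@_p.

Lemma linextU g p : linext g << p >> = g p.
Proof. by rewrite /linext msuppU oner_eq0 big_seq_fset1 mcoeffUU. Qed.

Lemma supp_in_linext (P : pred K) (Q : pred K') g f :
  (forall p, P p -> supp_in Q (g p)) -> supp_in P f -> supp_in Q (linext g f).
Proof.
move=> gQ Pf; rewrite /linext big_seq; apply: supp_in_sum => p.
by rewrite -mcoeff_neq0 => /Pf /gQ /supp_in_Mz.
Qed.

Lemma mcoeff_linext g f (D : {fset K}) k : (msupp f `<=` D)%fset ->
  (linext g f)@_k = \sum_(p <- D) (g p)@_k *~ f@_p.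
Proof.
move=> fD; rewrite /linext (big_fset_incl _ fD) => [|p _ /mcoeff_outdom ->]; last first.
  by rewrite mulr0z.
by rewrite raddf_sum; apply: eq_bigr => p _; rewrite raddfMz.
Qed.

End LinearExtension.

Section Restriction.

Variable K : choiceType.

Definition mrestrict (P : pred K) (f : {malg int[K]}) : {malg int[K]} :=
  linext (fun p => if P p then << p >> else 0) f.

Lemma mcoeff_mrestrict P f k : (mrestrict P f)@_k = if P k then f@_k else 0.
Proof.
rewrite (mcoeff_linext _ _ (fsubset_refl _)).
have [kf|kf] := boolP (k \in msupp f); last first.
  rewrite big1_seq => [|p /andP[_ pf]]; first by case: (P k); rewrite // mcoeff_outdom.
  case: (P p); rewrite ?mcoeff0 ?mul0rz // mcoeffU.
  by case: (p =P k) => [pk|_]; [rewrite -pk pf in kf | rewrite mul0rz].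
rewrite (big_fsetD1 k) //= big1_fset => [|p]; last first.
  rewrite in_fsetD1 => /andP[pk _] _.
  by case: (P p); rewrite ?mcoeffU ?mcoeff0 ?(negbTE pk) ?mul0rz.
by case: (P k); rewrite ?mcoeffUU ?mcoeff0 ?mul0rz ?intz addr0.
Qed.

Lemma mrestrictU P p : mrestrict P << p >> = if P p then << p >> else 0.
Proof. exact: linextU. Qed.

Lemma supp_in_mrestrict P f : supp_in P (mrestrict P f).
Proof. by move=> k; rewrite mcoeff_mrestrict; case: (P k); rewrite ?eqxx. Qed.

Lemma mrestrict_id P f : supp_in P f -> mrestrict P f = f.
Proof.
move=> Pf; apply/malgP => k; rewrite mcoeff_mrestrict.
by case: ifPn => // nPk; apply/esym/eqP/(contraNT (Pf k) nPk).
Qed.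

Lemma msupp_mrestrict P f : (msupp (mrestrict P f) `<=` msupp f)%fset.
Proof.
apply/fsubsetP => k; rewrite -!mcoeff_neq0 mcoeff_mrestrict.
by case: (P k); rewrite ?eqxx.
Qed.

End Restriction.

Lemma mrestrict_linext (K K' : choiceType) (P : pred K) (Q : pred K')
    (g : K -> {malg int[K']}) f :
  (forall p, supp_in (fun k => Q k == P p) (g p)) ->
  mrestrict Q (linext g f) = linext g (mrestrict P f).
Proof.
move=> gPQ; apply/malgP => k; rewrite mcoeff_mrestrict.
rewrite (mcoeff_linext _ _ (msupp_mrestrict P f)) (mcoeff_linext _ _ (fsubset_refl _)).
case: ifP => Qk; [apply: eq_bigr | apply/esym/big1] => p _; rewrite mcoeff_mrestrict;
  have [->|/gPQ/eqP QP] := eqVneq (g p)@_k 0; by rewrite ?mul0rz // -QP Qk /= ?mulr0z.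
Qed.

Lemma supp_mul_basis p q :
  supp_in (fun k => noRep k == noRep p && noRep q) (mul_basis p q).
Proof.
rewrite /mul_basis big_seq; apply: supp_in_sum => g /perm_shuffle g_shuffle.
apply: supp_inU.
by rewrite (noRep_mkSubst (same_supp_product_term g_shuffle)) (uniq_product_term g_shuffle).
Qed.

Lemma supp_comul_basis p :
  supp_in (fun pq : subst * subst => (noRep pq.1 && noRep pq.2) == noRep p) (comul_basis p).
Proof.
apply: supp_in_sum => i good_cut; apply: supp_inU => /=.
rewrite (noRep_mkSubst (same_supp_filter_mem (@subset_take_top p i))).
rewrite (noRep_mkSubst (same_supp_filter_mem (@subset_drop_top p i))).
by rewrite uniq_cut_term.
Qed.

Lemma mT_linext t : mT t = linext (fun pq : subst * subst => mul_basis pq.1 pq.2) t.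
Proof. by []. Qed.

Lemma comul_linext f : comul f = linext comul_basis f.
Proof. by []. Qed.

Lemma psi_mrestrict f : psi f = mrestrict noRep f.
Proof. by []. Qed.

Lemma tensUU p q : tens << p >> << q >> = << (p, q) >>.
Proof. by rewrite /tens !msuppU oner_eq0 !big_seq_fset1 !mcoeffUU mulr1. Qed.

Lemma tens0l f : tens 0 f = 0.
Proof. by rewrite /tens msupp0 big_seq_fset0. Qed.

Lemma tens0r f : tens f 0 = 0.
Proof. by rewrite /tens big1 // => p _; rewrite msupp0 big_seq_fset0. Qed.

Lemma map2_psi_mrestrict t :
  map2 psi t = mrestrict (fun pq : subst * subst => noRep pq.1 && noRep pq.2) t.
Proof.
apply: eq_bigr => -[p q] _ /=; rewrite !psi_mrestrict !mrestrictU.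
by case: (noRep p); case: (noRep q); rewrite ?tensUU ?tens0l ?tens0r.
Qed.

Lemma supp_hasRep_mul_basis p q :
  hasRep p || hasRep q -> supp_in hasRep (mul_basis p q).
Proof.
move=> rep; apply: (supp_in_sub _ (@supp_mul_basis p q)) => k /eqP.
by rewrite /hasRep => ->; rewrite negb_and.
Qed.

Lemma supp_hasRep_comul_basis p :
  hasRep p -> supp_in (fun pq : subst * subst => hasRep pq.1 || hasRep pq.2) (comul_basis p).
Proof.
move=> rep; apply: (supp_in_sub _ (@supp_comul_basis p)) => pq /eqP e.
by rewrite /hasRep -negb_and e.
Qed.

Lemma Jmult_mT_l t : J_A t -> Jmult (mT t).
Proof.
apply: (supp_in_linext (P := fun pq : subst * subst => hasRep pq.1)) => pq rep.
by apply: supp_hasRep_mul_basis; rewrite rep.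
Qed.

Lemma Jmult_mT_r t : A_J t -> Jmult (mT t).
Proof.
apply: (supp_in_linext (P := fun pq : subst * subst => hasRep pq.2)) => pq rep.
by apply: supp_hasRep_mul_basis; rewrite rep orbT.
Qed.

Lemma JA_plus_AJ_comul f : Jmult f -> JA_plus_AJ (comul f).
Proof. exact/supp_in_linext/supp_hasRep_comul_basis. Qed.

Lemma counit_Jmult f : Jmult f -> counit f = 0.
Proof. by move=> Jf; apply/eqP; apply: contraT => /Jf; rewrite /hasRep noRep_empty. Qed.

Lemma psi_mT t : psi (mT t) = mT (map2 psi t).
Proof.
rewrite psi_mrestrict map2_psi_mrestrict !mT_linext.
by apply: mrestrict_linext => -[p q]; apply: supp_mul_basis.
Qed.

Lemma psi_unit : psi unitW = unitW.
Proof. exact/mrestrict_id/supp_inU/noRep_empty. Qed.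

Lemma comul_psi f : comul (psi f) = map2 psi (comul f).
Proof.
rewrite map2_psi_mrestrict !comul_linext psi_mrestrict.
by apply/esym/mrestrict_linext => p; apply: supp_comul_basis.
Qed.

Lemma counit_psi f : counit (psi f) = counit f.
Proof. by rewrite /counit psi_mrestrict mcoeff_mrestrict noRep_empty. Qed.

Lemma inMPR_psi f : inMPR (psi f).
Proof. exact: supp_in_mrestrict. Qed.

Lemma psi_id f : inMPR f -> psi f = f.
Proof. exact: mrestrict_id. Qed.

Theorem mainTheorem8 :
  ((forall t : dWHA2, J_A t -> Jmult (mT t)) /\
   (forall t : dWHA2, A_J t -> Jmult (mT t)) /\
   (forall f : dWHA, Jmult f -> JA_plus_AJ (comul f)) /\
   (forall f : dWHA, Jmult f -> counit f = 0)) /\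
  ((forall t : dWHA2, psi (mT t) = mT (map2 psi t)) /\
   psi unitW = unitW /\
   (forall f : dWHA, comul (psi f) = map2 psi (comul f)) /\
   (forall f : dWHA, counit (psi f) = counit f)) /\
  ((forall f : dWHA, inMPR (psi f)) /\
   (forall f : dWHA, inMPR f -> psi f = f)).
Proof.
split; first by do !split; [exact: Jmult_mT_l | exact: Jmult_mT_r
                           | exact: JA_plus_AJ_comul | exact: counit_Jmult].
split; first by do !split; [exact: psi_mT | exact: psi_unit
                           | exact: comul_psi | exact: counit_psi].
by split; [exact: inMPR_psi | exact: psi_id].
Qed.
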